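(* Let $m\ge n$ be positive integers, $\pi$ uniform on $S_{n+m}$, and $\mathbf L=(l_1,\dots,l_n)$ a fixed $n$-tuple of distinct elements of $[m]$. For $i\in[n]$ let $$d_i=\mathbb 1\{\pi(i)\in[n],\ \pi(n+l_i)\in[n+m]\setminus[n]\}-\mathbb 1\{\pi(i)\in[n+m]\setminus[n],\ \pi(n+l_i)\in[n]\}.$$ Then $\sum_{i=1}^n d_i$ has mean zero and is $\mathrm{SG}(2n)$.
   Context: $S_{n+m}$ is the symmetric group on $[n+m]=\{1,\dots,n+m\}$. A real random variable $X$ is $\mathrm{SG}(\sigma^2)$ if $\mathbb E[\exp\{\lambda(X-\mathbb EX)\}]\le\exp(\lambda^2\sigma^2/2)$ for all $\lambda\in\mathbb R$. *)

From HB Require Import structures.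
From mathcomp Require Import all_boot all_order all_algebra all_fingroup.
From mathcomp Require Import all_classical all_reals all_analysis.
Set Implicit Arguments. Unset Strict Implicit. Unset Printing Implicit Defensive.
Import Order.TTheory GRing.Theory Num.Theory.
Local Open Scope ring_scope.

Definition Eperm (R : realType) (N : nat) (f : {perm 'I_N} -> R) : R :=
  (#|[set: {perm 'I_N}]|%:R)^-1 * \sum_(s : {perm 'I_N}) f s.

Definition subGaussian_perm (R : realType) (N : nat)
  (X : {perm 'I_N} -> R) (sigma2 : R) : Prop :=
  forall lambda : R,
    Eperm (fun s => expR (lambda * (X s - Eperm X))) <=
    expR (lambda ^+ 2 * sigma2 / 2).

(* Position i (1-based) is lshift m i; position n + l_i (1-based) is
   rshift n (l i) (0-based value n + (l i)). "pi(j) in [n]" is the 0-based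
   condition pi j < n; "pi(j) in [n+m] \ [n]" is n <= pi j. *)
Definition d_i (R : realType) (n m : nat) (l : 'I_n -> 'I_m)
  (s : {perm 'I_(n + m)}) (i : 'I_n) : R :=
  ((s (lshift m i) < n)%N && (n <= s (rshift n (l i)))%N)%:R
  - ((n <= s (lshift m i))%N && (s (rshift n (l i)) < n)%N)%:R.

Definition sum_d (R : realType) (n m : nat) (l : 'I_n -> 'I_m)
  (s : {perm 'I_(n + m)}) : R :=
  \sum_(i < n) d_i R l s i.

From HB Require Import structures.
From mathcomp Require Import all_boot all_order all_algebra all_fingroup.
From mathcomp Require Import all_classical all_reals all_analysis.
From mathcomp Require Import ring lra.
Set Implicit Arguments. Unset Strict Implicit. Unset Printing Implicit Defensive.
Import Order.TTheory GRing.Theory Num.Theory.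
Local Open Scope ring_scope.

(* The transposition tau_k exchanging positions k and n + l_k flips the sign
   of d_k and, l being injective, fixes every other d_i.  Since the uniform
   law is invariant under s |-> tau_k s, conditioning coordinate by coordinate
   replaces each factor exp(lambda d_k) of exp(lambda sum_i d_i) by
   cosh(lambda d_k) <= exp(lambda^2).  This gives both the zero mean and the
   bound exp(lambda^2 n) on the moment generating function. *)

Definition cosh (R : realType) (x : R) : R := (expR x + expR (- x)) / 2.

Section CoshBound.
Variable R : realType.
Implicit Types x : R.

Lemma expR_mulr_sqr_le1 x : x <= 2 -> expR x * (1 - x / 2) ^+ 2 <= 1.
Proof.
move=> x_le2.
have -> : expR x = expR (x / 2) ^+ 2 by rewrite -expRM_natr; congr expR; field.
rewrite -exprMn expr_le1 ?mulr_ge0 ?expR_ge0 //; last by lra.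
rewrite -[leRHS](expRxMexpNx_1 (x / 2)) ler_wpM2l ?expR_ge0 //.
by have := expR_ge1Dx (- (x / 2)); lra.
Qed.

Lemma sqr_1Dhalf_le_expR x : 0 <= x -> (1 + x / 2) ^+ 2 <= expR x.
Proof.
move=> x_ge0.
have -> : expR x = expR (x / 2) ^+ 2 by rewrite -expRM_natr; congr expR; field.
by rewrite ler_sqr ?nnegrE ?expR_ge0 ?expR_ge1Dx //; lra.
Qed.

Lemma cosh_le_expR_sqr x : cosh x <= expR (x ^+ 2).
Proof.
rewrite /cosh; have [x_big|x_small] := leP 1 `|x|.
  have x_le_sqr : `|x| <= x ^+ 2 by rewrite -real_normK ?num_real // expr2 ler_peMl.
  have : expR x <= expR (x ^+ 2) by rewrite ler_expR (le_trans (ler_norm x)).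
  have : expR (- x) <= expR (x ^+ 2).
    by rewrite ler_expR (le_trans (ler_norm (- x))) ?normrN.
  lra.
have [xl xr] : -1 < x /\ x < 1 by move: x_small; rewrite ltr_norml => /andP[].
have hp : expR x * (1 - x / 2) ^+ 2 <= 1 by apply: expR_mulr_sqr_le1; lra.
have hq : expR (- x) * (1 - (- x) / 2) ^+ 2 <= 1 by apply: expR_mulr_sqr_le1; lra.
set p := (1 - x / 2) ^+ 2 in hp *; set q := (1 - (- x) / 2) ^+ 2 in hq *.
have sqr_le_expR := @sqr_1Dhalf_le_expR _ (sqr_ge0 x).
have p_ge0 : 0 <= p by exact: sqr_ge0.
have q_ge0 : 0 <= q by exact: sqr_ge0.
have pq_gt0 : 0 < p * q by rewrite /p /q -exprMn exprn_gt0 //; nra.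
(* (e^x + e^-x) p q <= p + q <= 2 (1 + x^2/2)^2 p q, the last step being a
   polynomial inequality in x^2 <= 1. *)
have sum_le : (expR x + expR (- x)) * (p * q) <= p + q.
  have := ler_wpM2r q_ge0 hp; have := ler_wpM2r p_ge0 hq.
  rewrite mulrDl; nra.
have poly : p + q <= 2 * (1 + x ^+ 2 / 2) ^+ 2 * (p * q).
  have -> : p * q = (1 - x ^+ 2 / 4) ^+ 2 by rewrite /p /q -exprMn; congr (_ ^+ _); field.
  have -> : p + q = 2 + x ^+ 2 / 2 by rewrite /p /q; field.
  have : x ^+ 2 <= 1 by rewrite -real_normK ?num_real // expr_le1 // ltW.
  have := sqr_ge0 x; move: (x ^+ 2) => u *; nra.
have : expR x + expR (- x) <= 2 * (1 + x ^+ 2 / 2) ^+ 2.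
  by rewrite -(ler_pM2r pq_gt0); lra.
lra.
Qed.

Lemma cosh_ge0 x : 0 <= cosh x.
Proof. by rewrite /cosh divr_ge0 ?addr_ge0 ?expR_ge0. Qed.

End CoshBound.

Section Eperm.
Variables (R : realType) (N : nat).
Implicit Types f g : {perm 'I_N} -> R.

Lemma Eperm_cst (c : R) : Eperm (fun _ : {perm 'I_N} => c) = c.
Proof.
rewrite /Eperm sumr_const -cardsT -[c *+ _]mulr_natl mulrA mulVf ?mul1r //.
by rewrite pnatr_eq0 -lt0n; apply/card_gt0P; exists 1%g.
Qed.

Lemma ler_Eperm f g : (forall s, f s <= g s) -> Eperm f <= Eperm g.
Proof. by move=> fg; rewrite ler_wpM2l ?invr_ge0 // ler_sum. Qed.

End Eperm.

Section SignFlip.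
Variables (R : realType) (n m : nat) (l : 'I_n -> 'I_m).
Hypothesis l_inj : injective l.
Local Notation d := (d_i R l).

Definition tau (k : 'I_n) : {perm 'I_(n + m)} := tperm (lshift m k) (rshift n (l k)).

Lemma d_i_tauM_flip k s : d (tau k * s)%g k = - d s k.
Proof. by rewrite /d_i !permM tpermL tpermR opprB; congr (_%:R - _%:R); rewrite andbC. Qed.

Lemma d_i_tauM_fix k i s : i != k -> d (tau k * s)%g i = d s i.
Proof.
move=> ik; rewrite /d_i !permM !tpermD // ?eq_lrshift ?eq_rlshift //.
  by rewrite (inj_eq (@rshift_inj _ _)) (inj_eq l_inj) eq_sym.
by rewrite (inj_eq (@lshift_inj _ _)) eq_sym.
Qed.

Lemma sum_perm_tauM k (F : {perm 'I_(n + m)} -> R) :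
  \sum_s F (tau k * s)%g = \sum_s F s.
Proof. by rewrite [RHS](reindex_inj (@mulgI _ (tau k))). Qed.

Lemma sum_d_i_eq0 k : \sum_s d s k = 0.
Proof.
have : \sum_s d s k = - \sum_s d s k.
  by rewrite -[LHS](sum_perm_tauM k) -sumrN; apply: eq_bigr => s _; rewrite d_i_tauM_flip.
lra.
Qed.

Lemma sum_mul_expR_d_i (lam : R) k (H : {perm 'I_(n + m)} -> R) :
    (forall s, H (tau k * s)%g = H s) ->
  \sum_s H s * expR (lam * d s k) = \sum_s H s * cosh (lam * d s k).
Proof.
move=> H_tau.
have flip : \sum_s H s * expR (lam * d s k) = \sum_s H s * expR (- (lam * d s k)).
  by rewrite -[LHS](sum_perm_tauM k); apply: eq_bigr => s _; rewrite H_tau d_i_tauM_flip mulrN.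
have -> : \sum_s H s * cosh (lam * d s k) =
    (\sum_s H s * expR (lam * d s k) + \sum_s H s * expR (- (lam * d s k))) / 2.
  by rewrite -big_split big_distrl /=; apply: eq_bigr => s _; rewrite /cosh; ring.
lra.
Qed.

(* exp(lambda sum_i d_i) after the coordinates in A have been symmetrized. *)
Definition partial_mgf (lam : R) (A : {set 'I_n}) (s : {perm 'I_(n + m)}) : R :=
  (\prod_(i in A) cosh (lam * d s i)) * expR (lam * \sum_(i in ~: A) d s i).

Lemma sum_partial_mgf_setU1 (lam : R) (A : {set 'I_n}) k : k \notin A ->
  \sum_s partial_mgf lam (k |: A) s = \sum_s partial_mgf lam A s.
Proof.
move=> kA; pose H s := (\prod_(i in A) cosh (lam * d s i)) *
  expR (lam * \sum_(i in ~: (k |: A)) d s i).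
have compl : ~: A = k |: ~: (k |: A) by apply/setP => i; rewrite !inE; case: eqP => // ->.
have kNcompl : k \notin ~: (k |: A) by rewrite !inE eqxx.
transitivity (\sum_s H s * cosh (lam * d s k)).
  by apply: eq_bigr => s _; rewrite /partial_mgf big_setU1 //= /H; ring.
rewrite -sum_mul_expR_d_i => [|s].
  by apply: eq_bigr => s _; rewrite /partial_mgf compl big_setU1 //= [in RHS]mulrDr expRD /H; ring.
rewrite /H; congr (_ * expR (_ * _)); apply: eq_bigr => i iA; rewrite d_i_tauM_fix //.
  by apply: contraNneq kA => <-.
by move: iA; rewrite !inE negb_or => /andP[].
Qed.

Lemma sum_partial_mgf_set0 (lam : R) (A : {set 'I_n}) :
  \sum_s partial_mgf lam A s = \sum_s partial_mgf lam finset.set0 s.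
Proof.
elim: {A}_.+1 {-2}A (ltnSn #|A|) => // c IH A; have [-> //|[k kA] A_le] := set_0Vmem A.
rewrite -(finset.setD1K kA) sum_partial_mgf_setU1 ?setD11 // IH //.
by rewrite -ltnS (leq_trans _ A_le) // ltnS (cardsD1 k A) kA.
Qed.

Lemma cosh_mul_d_i_le (lam : R) s i : cosh (lam * d s i) <= expR (lam ^+ 2).
Proof.
apply: le_trans (cosh_le_expR_sqr _) _; rewrite ler_expR exprMn ler_piMr ?sqr_ge0 //.
by rewrite /d_i; do 2!case: (_ && _); rewrite /=; lra.
Qed.

Lemma partial_mgf_setT_le (lam : R) s : partial_mgf lam [set: 'I_n] s <= expR (lam ^+ 2) ^+ n.
Proof.
rewrite /partial_mgf finset.setCT big_set0 mulr0 expR0 mulr1.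
rewrite -[n in X in _ <= X]card_ord -cardsT -prodr_const.
by apply: ler_prod => i _; rewrite cosh_ge0 cosh_mul_d_i_le.
Qed.

End SignFlip.

Theorem mainTheorem12 (R : realType) (n m : nat) (l : 'I_n -> 'I_m)
  (hn : (0 < n)%N) (hnm : (n <= m)%N) (hl : injective l) :
  Eperm (sum_d R l) = 0 /\ subGaussian_perm (sum_d R l) (2 * n)%:R.
Proof.
have mean0 : Eperm (sum_d R l) = 0.
  rewrite /Eperm /sum_d exchange_big big1 ?mulr0 // => i _.
  exact: sum_d_i_eq0.
split => // lam; rewrite mean0.
have -> : Eperm (fun s => expR (lam * (sum_d R l s - 0))) =
    Eperm (fun s => partial_mgf l lam [set: _] s).
  rewrite /Eperm sum_partial_mgf_set0 //; congr (_ * _); apply: eq_bigr => s _.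
  rewrite /partial_mgf /sum_d big_set0 mul1r finset.setC0 subr0.
  by congr (expR (_ * _)); apply: eq_bigl => i; rewrite inE.
apply: le_trans (ler_Eperm (partial_mgf_setT_le l lam)) _.
have -> : lam ^+ 2 * (2 * n)%:R / 2 = lam ^+ 2 * n%:R by rewrite natrM; field.
by rewrite Eperm_cst expRM_natr.
Qed.
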